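(* Let $S_{r,N}$ be a nontrivial atomic exponential Puiseux semiring. For $x\in S_{r,N}$ and $m\in\mathbb{N}$ let $R_x(r^{s_m})=\mathsf{Z}(x)\cap(r^{s_m}+\mathsf{Z}(S_{r,N}))$ (the factorizations of $x$ in which the atom $r^{s_m}$ occurs). Then: (1) $\mathrm{Betti}(S_{r,N})=\{\mathsf{n}(r)^{\delta_n}r^{s_n}: n\in\mathbb{N}\}$; (2) if $x=\mathsf{n}(r)^{\delta_n}r^{s_n}$ for some $n\in\mathbb{N}$, then the set of $\mathcal{R}$-classes of $\mathsf{Z}(x)$ is exactly $\{R_x(r^{s_n}),R_x(r^{s_{n+1}})\}$.
   Context: $\mathbb{N}=\{0,1,2,\dots\}$. A numerical monoid $N$ is an additive submonoid of $\mathbb{N}$ with finite complement in $\mathbb{N}$. For $r\in\mathbb{Q}_{>0}$ write $r=\mathsf{n}(r)/\mathsf{d}(r)$ in lowest terms. The exponential Puiseux semiring $S_{r,N}$ is the additive submonoid of $\mathbb{Q}_{\ge0}$ generated by $\{r^k:k\in N\}$; it is nontrivial if $r\notin\mathbb{N}$, and then it is atomic iff $\mathsf{n}(r)>1$, with atoms $r^s$, $s\in N$. Let $s_0<s_1<\cdots$ be the elements of $N$ in increasing order and $\delta_n=s_{n+1}-s_n$. For an atomic monoid $M$, $\mathsf{Z}(M)$ is the free commutative monoid on the atoms, $\pi:\mathsf{Z}(M)\to M$ the evaluation homomorphism, $\mathsf{Z}(x)=\pi^{-1}(x)$. For factorizations $z=\sum\alpha_a a$, $z'=\sum\beta_a a$,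 $\gcd(z,z')=\sum\min(\alpha_a,\beta_a)a$. Two factorizations $z,z'\in\mathsf{Z}(x)$ are $\mathcal{R}$-related if there is a chain $z=z_1,\dots,z_n=z'$ in $\mathsf{Z}(x)$ with $\gcd(z_i,z_{i+1})$ nonzero (nonempty) for all $i$. An element $x$ is a Betti element if $\mathsf{Z}(x)$ has more than one $\mathcal{R}$-class; $\mathrm{Betti}(M)$ is the set of Betti elements. *)

From mathcomp Require Import all_boot all_order all_algebra.
Set Implicit Arguments. Unset Strict Implicit. Unset Printing Implicit Defensive.
Import Order.TTheory GRing.Theory Num.Theory.
Local Open Scope ring_scope.

(* A numerical monoid: submonoid of N with finite complement
   (finite complement <-> all sufficiently large naturals belong to N). *)
Definition numerical_monoid (N : nat -> Prop) : Prop :=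
  N 0%N /\ (forall a b, N a -> N b -> N (a + b)%N) /\
  exists B : nat, forall n, (B <= n)%N -> N n.

Definition increasing_enum (N : nat -> Prop) (s : nat -> nat) : Prop :=
  (forall n, (s n < s n.+1)%N) /\ (forall k, N k <-> exists n, s n = k).

Definition inS (r : rat) (N : nat -> Prop) (x : rat) : Prop :=
  exists l : seq nat, (forall k, k \in l -> N k) /\ x = \sum_(k <- l) r ^+ k.

(* atoms of S_{r,N} (the only unit of this reduced monoid is 0) *)
Definition is_atom (r : rat) (N : nat -> Prop) (a : rat) : Prop :=
  inS r N a /\ a != 0 /\
  forall b c, inS r N b -> inS r N c -> a = b + c -> b = 0 \/ c = 0.

(* factorizations of x, represented as finite lists (multisets) of atoms *)
Definition is_fact (r : rat) (N : nat -> Prop) (x : rat) (z : seq rat) : Prop :=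
  (forall a, a \in z -> is_atom r N a) /\ \sum_(a <- z) a = x.

Definition atomic (r : rat) (N : nat -> Prop) : Prop :=
  forall x, inS r N x -> x != 0 -> exists z, is_fact r N x z.

(* gcd(z, z') is nonzero iff z and z' share an atom *)
Definition gcd_nonzero (z z' : seq rat) : Prop := exists a, a \in z /\ a \in z'.

Inductive Rrel (r : rat) (N : nat -> Prop) (x : rat) : seq rat -> seq rat -> Prop :=
| Rrel_refl z : is_fact r N x z -> Rrel r N x z z
| Rrel_step z1 z2 z3 : Rrel r N x z1 z2 -> is_fact r N x z3 ->
    gcd_nonzero z2 z3 -> Rrel r N x z1 z3.

Definition is_Betti (r : rat) (N : nat -> Prop) (x : rat) : Prop :=
  exists z z', is_fact r N x z /\ is_fact r N x z' /\ ~ Rrel r N x z z'.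

Definition Rx (r : rat) (N : nat -> Prop) (x a : rat) (z : seq rat) : Prop :=
  is_fact r N x z /\ a \in z.

Definition betti_elt (r : rat) (s : nat -> nat) (n : nat) : rat :=
  (numq r)%:~R ^+ (s n.+1 - s n) * r ^+ s n.

Definition Rclass_is (r : rat) (N : nat -> Prop) (x : rat) (z : seq rat)
  (P : seq rat -> Prop) : Prop :=
  forall z', Rrel r N x z z' <-> P z'.

From mathcomp Require Import all_boot all_order all_algebra.
From mathcomp Require Import zify ring lra.
From Stdlib Require Import Classical.
Set Implicit Arguments. Unset Strict Implicit. Unset Printing Implicit Defensive.
Import Order.TTheory GRing.Theory Num.Theory.
Local Open Scope ring_scope.

(* Write r = p/q in lowest terms; r is not an integer, so q > 1, and
   atomicity forces p > 1.  The atoms are exactly the powers r^e, e in N,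
   so a factorization of x is an exponent list l with sum_{e in l} r^e = x.
   Clearing denominators, q^t * sum_{e in l} r^e is the natural number
   numer l t = sum p^e q^(t-e) when t bounds l; all arithmetic consists in
   comparing divisibility of such numerators by powers of p and of q.
   Put x_n := n(r)^{δ_n} r^{s_n} = p^{s_{n+1}} / q^{s_n} (betti_elt).
   - Every factorization of x_n either has all exponents <= s_n and contains
     s_n, or has all exponents >= s_{n+1} and contains s_{n+1}
     (betti_exps).  Sharing an atom preserves the shape, so R_x(r^{s_n}) and
     R_x(r^{s_{n+1}}) are the R-classes of Z(x_n), both nonempty (p^{δ_n}
     copies of r^{s_n}, q^{δ_n} copies of r^{s_{n+1}}): x_n is Betti.
   - If x is no x_k, Z(x) is one R-class (exps_connected): a factorization
     with q^{δ_k} copies of r^{s_{k+1}} trades them for p^{δ_k} copies of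
     r^{s_k}, lowering the weight sum p^e while keeping a common atom; two
     trade-free factorizations always share an atom, by looking at the
     q-divisibility of numerators at their largest exponent (reduced_top). *)

Section Rrelation.
Variables (r : rat) (N : nat -> Prop) (x : rat).

Lemma Rrel_facts z1 z2 : Rrel r N x z1 z2 -> is_fact r N x z1 /\ is_fact r N x z2.
Proof. by elim=> [z hz | z1' z2' z3 _ [h1 _] h3 _]. Qed.

Lemma Rrel_share z1 z2 : is_fact r N x z1 -> is_fact r N x z2 ->
  gcd_nonzero z1 z2 -> Rrel r N x z1 z2.
Proof. by move=> h1 h2; apply: Rrel_step => //; apply: Rrel_refl. Qed.

Lemma Rrel_trans z1 z2 z3 :
  Rrel r N x z1 z2 -> Rrel r N x z2 z3 -> Rrel r N x z1 z3.
Proof.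
move=> h12 h23; elim: h23 h12 => // z2' z3' z4 _ IH h4 g h12.
exact: Rrel_step (IH h12) h4 g.
Qed.

Lemma Rclass_of_invariant a z :
  (forall z1 z2, is_fact r N x z1 -> is_fact r N x z2 ->
     gcd_nonzero z1 z2 -> a \in z1 -> a \in z2) ->
  is_fact r N x z -> a \in z -> Rclass_is r N x z (Rx r N x a).
Proof.
move=> inv hz az z'; split => [hzz' | [hz' az']].
  split; first by case: (Rrel_facts hzz').
  elim: hzz' az => // z1 z2 z3 h12 IH h3 g /IH; apply: inv h3 g.
  by case: (Rrel_facts h12).
by apply: Rrel_share => //; exists a.
Qed.

End Rrelation.

Section Enumeration.
Variables (N : nat -> Prop) (s : nat -> nat).
Hypothesis hs : increasing_enum N s.

Lemma enum_leE i j : (s i <= s j)%N = (i <= j)%N.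
Proof. case: hs => inc _; exact/leq_mono/(homo_ltn ltn_trans inc). Qed.

Lemma enum_mem i : N (s i).
Proof. by apply/(proj2 hs); exists i. Qed.

Lemma enum_surj k : N k -> exists i, s i = k.
Proof. exact: (proj2 hs k).1. Qed.

Lemma enum_gap n e : N e -> (e <= s n)%N \/ (s n.+1 <= e)%N.
Proof.
case/enum_surj => i <-; rewrite !enum_leE.
by case: (leqP i n) => h; [left | right].
Qed.

Lemma enum_min e : N e -> (s 0 <= e)%N.
Proof. by case/enum_surj => i <-; rewrite enum_leE. Qed.

End Enumeration.

Lemma dvdn_small d k : (d %| k)%N -> (k < d)%N -> k = 0%N.
Proof. by case: k => // k /(dvdn_leq (ltn0Sn k)); rewrite leqNgt => /negbTE ->. Qed.

Lemma sumr_nseq (V : nmodType) (I : Type) (F : I -> V) k (a : I) :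
  \sum_(i <- nseq k a) F i = F a *+ k.
Proof. by rewrite big_nseq iter_addr addr0. Qed.

Lemma sum_count_split (V : nmodType) (F : nat -> V) t (l : seq nat) :
  \sum_(e <- l) F e = F t *+ count_mem t l + \sum_(e <- [seq e <- l | e != t]) F e.
Proof.
rewrite (bigID (pred1 t)) big_filter /=; congr (_ + _).
rewrite (eq_bigr (fun=> F t)) => [|e /eqP ->] //.
by rewrite big_const_seq iter_addr addr0.
Qed.

Lemma mulrn_nat (x n : nat) : x *+ n = (x * n)%N.
Proof. by elim: n => [|n IH]; rewrite ?muln0 // mulrS IH mulnS. Qed.

Lemma bigmax_mem (l : seq nat) : l != [::] -> \max_(e <- l) e \in l.
Proof.
elim: l => // a l IH _; rewrite big_cons inE.
case: (eqVneq l [::]) => [-> | /IH ml]; first by rewrite big_nil maxn0 eqxx.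
by case: leqP; rewrite ?ml ?orbT ?eqxx.
Qed.

Lemma coprime_ndvdX a b u : coprime a b -> (1 < a)%N -> ~~ (a %| b ^ u)%N.
Proof.
move=> cab a_gt1; apply/negP => /gcdn_idPl.
by rewrite (eqP (coprimeXr u cab)) => a1; rewrite -a1 in a_gt1.
Qed.

Section PowersOfR.
Variable r : rat.
Hypothesis r_gt0 : 0 < r.
Hypothesis r_nonint : ~ (exists m : nat, r = m%:R).

Definition p : nat := `|numq r|%N.
Definition q : nat := `|denq r|%N.

Lemma numq_p : numq r = p%:Z.
Proof. by rewrite /p gez0_abs // ltW // numq_gt0. Qed.

Lemma denq_q : denq r = q%:Z.
Proof. by rewrite /q gez0_abs // ltW // denq_gt0. Qed.

Lemma r_pq : r = p%:R / q%:R.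
Proof. by rewrite -{1}[r]divq_num_den numq_p denq_q. Qed.

Lemma p_gt0 : (0 < p)%N.
Proof. by rewrite -ltz_nat -numq_p numq_gt0. Qed.

Lemma q_gt1 : (1 < q)%N.
Proof.
have : (0 < q)%N by rewrite -ltz_nat -denq_q denq_gt0.
case Hq: q => [|[|n]] // _; case: r_nonint; exists p.
by rewrite r_pq Hq divr1.
Qed.

Lemma q_gt0 : (0 < q)%N.
Proof. exact: ltnW q_gt1. Qed.

Lemma coprime_pq : coprime p q.
Proof. exact: coprime_num_den. Qed.

Lemma qX_neq0 h : ((q ^ h)%:R : rat) != 0.
Proof. by rewrite pnatr_eq0 expn_eq0 negb_and -lt0n q_gt0. Qed.

Lemma rexp e : r ^+ e = (p ^ e)%:R / (q ^ e)%:R.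
Proof. by rewrite r_pq exprMn exprVn !natrX. Qed.

Lemma trade_eq d m : ((p ^ d)%:R : rat) * r ^+ m = (q ^ d)%:R * r ^+ (m + d).
Proof.
rewrite exprD [r ^+ d]rexp.
by have := qX_neq0 d; move=> ?; field.
Qed.

Lemma rexp_inj : injective (GRing.exp r).
Proof.
have r_neq1 : r != 1 by apply/eqP => r1; apply: r_nonint; exists 1%N.
move=> i j; wlog hij : i j / (i <= j)%N.
  by move=> H; case: (leqP i j) => [|/ltnW] /H // H' /esym /H'.
rewrite /= -(subnK hij) exprD => e.
have ri : r ^+ i != 0 by rewrite expf_neq0 // gt_eqF.
have /eqP : r ^+ (j - i) = 1 by apply: (mulIf ri); rewrite mul1r.
by rewrite ieexprn_weq1 ?ltW // (negbTE r_neq1) orbF => /eqP ->.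
Qed.

Lemma sum_rexp_ge0 (l : seq nat) : 0 <= \sum_(e <- l) r ^+ e.
Proof. by apply: sumr_ge0 => e _; rewrite ltW // exprn_gt0. Qed.

Lemma sum_rexp_eq0 (l : seq nat) : \sum_(e <- l) r ^+ e = 0 -> l = [::].
Proof.
case: l => // a l; rewrite big_cons => h; exfalso.
by have := exprn_gt0 a r_gt0; have := sum_rexp_ge0 l; lra.
Qed.

Definition numer (l : seq nat) (t : nat) : nat := \sum_(e <- l) p ^ e * q ^ (t - e).

Lemma numer_cast (l : seq nat) t : (forall e, e \in l -> (e <= t)%N) ->
  (numer l t)%:R = (q ^ t)%:R * \sum_(e <- l) r ^+ e :> rat.
Proof.
move=> hl; rewrite natr_sum mulr_sumr; apply: eq_big_seq => e /hl het.
rewrite rexp -{2}(subnK het) expnD !natrM.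
by have := qX_neq0 e; move=> ?; field.
Qed.

Lemma numer_dvd_q (l : seq nat) d t :
  (forall e, e \in l -> (e + d <= t)%N) -> (q ^ d %| numer l t)%N.
Proof.
move=> hl; rewrite /numer big_seq; apply: dvdn_sum => e /hl het.
by apply/dvdn_mull/dvdn_exp2l; lia.
Qed.

Lemma numer_dvd_p (l : seq nat) u t :
  (forall e, e \in l -> (u <= e)%N) -> (p ^ u %| numer l t)%N.
Proof.
move=> hl; rewrite /numer big_seq; apply: dvdn_sum => e /hl hue.
exact/dvdn_mulr/dvdn_exp2l.
Qed.

Lemma numer_eq0 (l : seq nat) t : numer l t = 0%N -> l = [::].
Proof.
case: l => // a l; rewrite /numer big_cons => /eqP; rewrite addn_eq0 muln_eq0.
by rewrite !expn_eq0 (gtn_eqF p_gt0) (gtn_eqF q_gt0).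
Qed.

Lemma high_part_pdvd (l : seq nat) u h m : (forall e, e \in l -> (u <= e)%N) ->
  (q ^ h)%:R * \sum_(e <- l) r ^+ e = m%:R :> rat -> (p ^ u %| m)%N.
Proof.
move=> hl hm; set M := (\max_(e <- l) e + h)%N.
have lM e : e \in l -> (e <= M)%N.
  by move=> he; apply: leq_trans (leq_addr _ _); exact: leq_bigmax_seq.
have hM : numer l M = (q ^ (M - h) * m)%N.
  apply/eqP; rewrite -(eqr_nat rat) numer_cast // natrM -hm mulrA -natrM.
  by rewrite -expnD subnK // leq_addl.
have := numer_dvd_p M hl; rewrite hM Gauss_dvdr //.
by rewrite coprimeXl // coprimeXr // coprime_pq.
Qed.

Lemma split_low_high (l : seq nat) h t u :
  (forall e, e \in l -> (e <= h)%N \/ (t <= e)%N) ->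
  \sum_(e <- l) r ^+ e = (p ^ u)%:R / (q ^ h)%:R ->
  let A := numer [seq e <- l | (e <= h)%N] h in
  [/\ (A <= p ^ u)%N, (p ^ t %| p ^ u - A)%N &
      ((A = p ^ u)%N -> forall e, e \in l -> (e <= h)%N)].
Proof.
move=> hl hs A; set H := [seq e <- l | ~~ (e <= h)%N].
have E : A%:R + (q ^ h)%:R * \sum_(e <- H) r ^+ e = (p ^ u)%:R :> rat.
  have hsplit : \sum_(e <- l) r ^+ e =
      \sum_(e <- [seq e <- l | (e <= h)%N]) r ^+ e + \sum_(e <- H) r ^+ e.
    by rewrite (bigID (fun e => (e <= h)%N)) /= !big_filter.
  rewrite numer_cast => [|e]; last by rewrite mem_filter => /andP[].
  by rewrite -mulrDr -hsplit hs; have := qX_neq0 h; move=> ?; field.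
have Ale : (A <= p ^ u)%N.
  by rewrite -(ler_nat rat) -E lerDl mulr_ge0 // sum_rexp_ge0.
split => // [|hA e he].
  apply: (high_part_pdvd (l := H) (h := h)).
    move=> e; rewrite mem_filter -ltnNge => /andP [lt_he /hl].
    by case=> // le_eh; rewrite leqNgt lt_he in le_eh.
  by rewrite natrB // -E addrAC subrr add0r.
have /sum_rexp_eq0 H0 : \sum_(e <- H) r ^+ e = 0.
  apply: (mulfI (qX_neq0 h)); apply: (addrI A%:R).
  by rewrite E hA mulr0 addr0.
have : e \notin H by rewrite H0.
by rewrite mem_filter he andbT negbK.
Qed.

Lemma q_ndvd_pX u : ~~ (q %| p ^ u)%N.
Proof. by apply: coprime_ndvdX q_gt1; rewrite coprime_sym coprime_pq. Qed.

Section Semiring.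
Variables (N : nat -> Prop) (s : nat -> nat).
Hypothesis hN : numerical_monoid N.
Hypothesis hs : increasing_enum N s.
Hypothesis hat : atomic r N.

Lemma inS_sum (l : seq nat) :
  (forall e, e \in l -> N e) -> inS r N (\sum_(e <- l) r ^+ e).
Proof. by exists l. Qed.

Lemma inS_rexp e : N e -> inS r N (r ^+ e).
Proof.
by move=> he; exists [:: e]; rewrite big_seq1; split => // k; rewrite inE => /eqP ->.
Qed.

Lemma rexp_neq0 e : r ^+ e != 0.
Proof. by rewrite expf_neq0 // gt_eqF. Qed.

(* Every atom is a power r^e with e in N: an element of S_{r,N} written
   with two or more powers of r is a nontrivial sum. *)
Lemma atom_exp a : is_atom r N a -> exists e, N e /\ a = r ^+ e.
Proof.
case=> [[[|e [|e' l]] [hl ->]] [nz hat_a]]; first by rewrite big_nil eqxx in nz.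
  by exists e; rewrite big_seq1; split => //; apply: hl; rewrite inE.
have hl' k : k \in e' :: l -> N k by move=> hk; apply: hl; rewrite inE hk orbT.
case: (hat_a (r ^+ e) (\sum_(k <- e' :: l) r ^+ k)).
- by apply: inS_rexp; apply: hl; rewrite inE eqxx.
- exact: inS_sum.
- by rewrite big_cons.
- by move/eqP; rewrite (negbTE (rexp_neq0 e)).
- by move/sum_rexp_eq0.
Qed.

(* Atomicity forces n(r) > 1: if p = 1, every power r^e splits as q^d copies
   of r^(e+d) for large d, so S_{r,N} would have no atoms at all, while the
   nonzero element 1 = r^0 needs one. *)
Lemma p_gt1 : (1 < p)%N.
Proof.
have : (0 < p)%N := p_gt0; case: (ltngtP p 1) => // p1 _.
have no_atom a : ~ is_atom r N a.
  move=> ha; have [e [_ ea]] := atom_exp ha; case: ha => _ [_ split_a]; subst a.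
  case: hN => _ [_ [B HB]]; set d := B.+1.
  have Ned : N (e + d)%N by apply: HB; rewrite /d; lia.
  have qd_gt1 : (1 < q ^ d)%N.
    by apply: leq_trans q_gt1 _; rewrite -{1}(expn1 q) leq_pexp2l // q_gt0.
  have E : r ^+ e = r ^+ (e + d) + \sum_(k <- nseq (q ^ d).-1 (e + d)) r ^+ k.
    rewrite sumr_nseq -mulrS prednK ?(ltnW qd_gt1) // -mulr_natl.
    by rewrite -trade_eq p1 exp1n mul1r.
  case: (split_a _ _ (inS_rexp Ned) _ E).
  - by apply: inS_sum => k; rewrite mem_nseq => /andP [_ /eqP ->].
  - by apply/eqP; rewrite rexp_neq0.
  - by move/sum_rexp_eq0/(congr1 size); rewrite size_nseq /=; lia.
have N0 : N 0%N by case: hN.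
have [[|a z] [hz sum1]] := hat (inS_rexp N0) (rexp_neq0 0).
  by move: sum1; rewrite big_nil expr0 => /eqP; rewrite eq_sym oner_eq0.
by case: (no_atom a); apply: hz; rewrite inE eqxx.
Qed.

(* If r^j = b + c with b, c
   sums of powers of r, either j occurs among the exponents (and then it is
   the only one), or clearing denominators yields a numerator equal to p^j
   and divisible by q, which is impossible. *)
Lemma exp_atom j : N j -> is_atom r N (r ^+ j).
Proof.
move=> Nj; split; first exact: inS_rexp; split; first exact: rexp_neq0.
move=> b c [l1 [_ ->]] [l2 [_ ->]] E.
have {E} sum_l : \sum_(e <- l1 ++ l2) r ^+ e = r ^+ j by rewrite big_cat.
case: (boolP (j \in l1 ++ l2)) => [jl | j_notin].
  have : \sum_(e <- rem j (l1 ++ l2)) r ^+ e = 0.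
    apply: (addrI (r ^+ j)); rewrite addr0 -{2}sum_l (perm_big _ (perm_to_rem jl)).
    by rewrite big_cons.
  move/sum_rexp_eq0/(congr1 size); rewrite size_rem // size_cat.
  case: l1 {sum_l jl} => [|a1 l1] size_eq; first by left; rewrite big_nil.
  by case: l2 size_eq => [|a2 l2] /= size_eq; [right; rewrite big_nil | lia].
exfalso.
have ne_j e : e \in l1 ++ l2 -> e != j by apply: contraTneq => ->.
have side e : e \in l1 ++ l2 -> (e <= j)%N \/ (j.+1 <= e)%N.
  by move=> /ne_j; lia.
have [le_A dvd_A _] := split_low_high side (etrans sum_l (rexp j)).
set A := numer _ _ in le_A dvd_A.
have pj_lt : (p ^ j - A < p ^ j.+1)%N.
  by apply: leq_ltn_trans (leq_subr _ _) _; rewrite ltn_exp2l // p_gt1.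
have A_pj : A = (p ^ j)%N by have := dvdn_small dvd_A pj_lt; lia.
have : (q ^ 1 %| A)%N.
  apply: numer_dvd_q => e; rewrite mem_filter => /andP [le_ej /ne_j].
  by rewrite addn1 ltn_neqAle le_ej andbT.
by rewrite A_pj expn1 (negbTE (q_ndvd_pX _)).
Qed.

Lemma fact_exps x z : is_fact r N x z ->
  exists l, [/\ forall e, e \in l -> N e, z = [seq r ^+ e | e <- l]
               & \sum_(e <- l) r ^+ e = x].
Proof.
case=> atoms <-.
suff [l Nl ->] : exists2 l, (forall e, e \in l -> N e) & z = [seq r ^+ e | e <- l].
  by exists l; rewrite big_map.
elim: z atoms => [|a z IH] atoms; first by exists [::].
have [l Nl ->] : exists2 l, (forall e, e \in l -> N e) & z = [seq r ^+ e | e <- l].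
  by apply: IH => b hb; apply: atoms; rewrite inE hb orbT.
have [e [Ne ->]] := atom_exp (atoms a (mem_head _ _)).
by exists (e :: l) => // k; rewrite inE => /predU1P [-> | /Nl].
Qed.

Lemma exps_fact (l : seq nat) : (forall e, e \in l -> N e) ->
  is_fact r N (\sum_(e <- l) r ^+ e) [seq r ^+ e | e <- l].
Proof.
move=> Nl; split; last by rewrite big_map.
by move=> a /mapP [e /Nl Ne ->]; exact: exp_atom.
Qed.

Lemma mem_rexp e (l : seq nat) : (r ^+ e \in [seq r ^+ k | k <- l]) = (e \in l).
Proof. exact: (mem_map rexp_inj). Qed.

Lemma gcd_nonzero_exps (l1 l2 : seq nat) :
  gcd_nonzero [seq r ^+ e | e <- l1] [seq r ^+ e | e <- l2] ->
  exists e, e \in l1 /\ e \in l2.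
Proof. by case=> _ [/mapP [e e1 ->]]; rewrite mem_rexp => e2; exists e. Qed.

Lemma betti_eq n : betti_elt r s n = (p ^ (s n.+1 - s n))%:R * r ^+ s n.
Proof. by rewrite /betti_elt numq_p natrX. Qed.

Lemma betti_pq n : betti_elt r s n = (p ^ s n.+1)%:R / (q ^ s n)%:R.
Proof.
rewrite /betti_elt numq_p (_ : (p%:Z)%:~R = p%:R) // rexp.
rewrite -[in RHS](subnK (ltnW (proj1 hs n))) expnD !natrM !natrX.
by rewrite mulrA.
Qed.

(* The numerator of
   the part below s_n is 0 or p^{s_{n+1}}; in each case the missing extreme
   exponent would make it divisible by q, resp. by p^{s_{n+1}+1}. *)
Lemma betti_exps n (l : seq nat) : (forall e, e \in l -> N e) ->
  \sum_(e <- l) r ^+ e = betti_elt r s n ->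
  ((forall e, e \in l -> (e <= s n)%N) /\ s n \in l) \/
  ((forall e, e \in l -> (s n.+1 <= e)%N) /\ s n.+1 \in l).
Proof.
move=> Nl; rewrite betti_pq; set h := s n; set t := s n.+1 => sum_l.
have side e : e \in l -> (e <= h)%N \/ (t <= e)%N by move/Nl/(enum_gap hs n).
have [le_A dvd_A all_low] := split_low_high side sum_l.
set A := numer _ _ in le_A dvd_A all_low.
have [A0 | A_pos] := posnP A.
  right; have all_high e : e \in l -> (t <= e)%N.
    move=> he; case: (side e he) => // le_eh.
    have : e \in [seq e <- l | (e <= h)%N] by rewrite mem_filter le_eh he.
    by rewrite (numer_eq0 A0).
  split => //; apply: contraT => t_notin.
  have : (p ^ t.+1 %| p ^ t)%N.
    apply: (high_part_pdvd (l := l) (h := h)) => [e he|].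
      by rewrite ltn_neqAle all_high // andbT; apply: contraNneq t_notin => ->.
    by rewrite sum_l mulrC mulfVK ?qX_neq0.
  rewrite expnS -{2}[(p ^ t)%N]mul1n dvdn_pmul2r ?expn_gt0 ?p_gt0 // dvdn1.
  by rewrite gtn_eqF // p_gt1.
have A_pt : A = (p ^ t)%N.
  by have := dvdn_small dvd_A (_ : p ^ t - A < p ^ t)%N; lia.
left; have all_le := all_low A_pt; split => //; apply: contraT => h_notin.
have : (q ^ 1 %| A)%N.
  apply: numer_dvd_q => e; rewrite mem_filter => /andP [le_eh el].
  by rewrite addn1 ltn_neqAle le_eh andbT; apply: contraNneq h_notin => <-.
by rewrite A_pt expn1 (negbTE (q_ndvd_pX _)).
Qed.

Lemma betti_side n (l : seq nat) e : (forall e, e \in l -> N e) ->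
  \sum_(e <- l) r ^+ e = betti_elt r s n -> e \in l ->
  (s n \in l) = (e <= s n)%N /\ (s n.+1 \in l) = (s n.+1 <= e)%N.
Proof.
move=> Nl sum_l el; have lt_n := proj1 hs n.
case: (betti_exps Nl sum_l) => [[low inl] | [high inl]].
  have le_e := low e el; rewrite inl le_e; split => //.
  by apply/idP/idP => [/low|]; lia.
have ge_e := high e el; rewrite inl ge_e; split => //.
by apply/idP/idP => [/high|]; lia.
Qed.

Lemma betti_share n a z1 z2 : a = r ^+ s n \/ a = r ^+ s n.+1 ->
  is_fact r N (betti_elt r s n) z1 -> is_fact r N (betti_elt r s n) z2 ->
  gcd_nonzero z1 z2 -> a \in z1 -> a \in z2.
Proof.
move=> ha /fact_exps [l1 [N1 -> sum1]] /fact_exps [l2 [N2 -> sum2]].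
move=> /gcd_nonzero_exps [e [e1 e2]].
have [side1 side1'] := betti_side N1 sum1 e1.
have [side2 side2'] := betti_side N2 sum2 e2.
by case: ha => ->; rewrite !mem_rexp ?side1 ?side2 ?side1' ?side2'.
Qed.

Lemma betti_class n a z : a = r ^+ s n \/ a = r ^+ s n.+1 ->
  is_fact r N (betti_elt r s n) z -> a \in z ->
  Rclass_is r N (betti_elt r s n) z (Rx r N (betti_elt r s n) a).
Proof. by move=> ha; apply: Rclass_of_invariant => z1 z2; exact: betti_share. Qed.

Lemma betti_classes n z : is_fact r N (betti_elt r s n) z ->
  Rclass_is r N (betti_elt r s n) z (Rx r N (betti_elt r s n) (r ^+ s n)) \/
  Rclass_is r N (betti_elt r s n) z (Rx r N (betti_elt r s n) (r ^+ s n.+1)).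
Proof.
move=> hz; have [l [Nl zl sum_l]] := fact_exps hz.
case: (betti_exps Nl sum_l) => [[_ inl] | [_ inl]].
  by left; apply: betti_class => //; [left | rewrite zl mem_rexp].
by right; apply: betti_class => //; [right | rewrite zl mem_rexp].
Qed.

Lemma Rx_low n : Rx r N (betti_elt r s n) (r ^+ s n)
  [seq r ^+ e | e <- nseq (p ^ (s n.+1 - s n)) (s n)].
Proof.
split; last by rewrite mem_rexp mem_nseq expn_gt0 p_gt0 eqxx.
rewrite betti_eq mulr_natl -(sumr_nseq (GRing.exp r)).
by apply: exps_fact => e; rewrite mem_nseq => /andP [_ /eqP ->]; exact: (enum_mem hs).
Qed.

Lemma Rx_high n : Rx r N (betti_elt r s n) (r ^+ s n.+1)
  [seq r ^+ e | e <- nseq (q ^ (s n.+1 - s n)) (s n.+1)].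
Proof.
split; last by rewrite mem_rexp mem_nseq expn_gt0 q_gt0 eqxx.
rewrite betti_eq trade_eq (subnKC (ltnW (proj1 hs n))) mulr_natl.
rewrite -(sumr_nseq (GRing.exp r)).
by apply: exps_fact => e; rewrite mem_nseq => /andP [_ /eqP ->]; exact: (enum_mem hs).
Qed.

(* The induction measure for connectedness: trading decreases it. *)
Definition weight (l : seq nat) : nat := \sum_(e <- l) p ^ e.

(* Trading at level k replaces q^{δ_k} copies of s_{k+1} by p^{δ_k}
   copies of s_k, which preserves the value (trade_eq). *)
Definition traded (k : nat) (l : seq nat) : seq nat :=
  nseq (p ^ (s k.+1 - s k)) (s k) ++
  nseq (count_mem (s k.+1) l - q ^ (s k.+1 - s k)) (s k.+1) ++
  [seq e <- l | e != s k.+1].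

Lemma traded_N k (l : seq nat) : (forall e, e \in l -> N e) ->
  forall e, e \in traded k l -> N e.
Proof.
move=> Nl e; rewrite !mem_cat !mem_nseq mem_filter.
by case/or3P => [/andP [_ /eqP ->] | /andP [_ /eqP ->] | /andP [_ /Nl]] //;
  exact: (enum_mem hs).
Qed.

Lemma traded_sum k (l : seq nat) :
  (q ^ (s k.+1 - s k) <= count_mem (s k.+1) l)%N ->
  \sum_(e <- traded k l) r ^+ e = \sum_(e <- l) r ^+ e.
Proof.
move=> enough; rewrite [RHS](sum_count_split (GRing.exp r) (s k.+1)).
rewrite !big_cat /= !sumr_nseq addrA; congr (_ + _).
rewrite -{2}(subnK enough) mulrnDr [RHS]addrC; congr (_ + _).
by rewrite -[LHS]mulr_natl -[RHS]mulr_natl trade_eq (subnKC (ltnW (proj1 hs k))).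
Qed.

Lemma traded_weight k (l : seq nat) :
  (q ^ (s k.+1 - s k) <= count_mem (s k.+1) l)%N ->
  (weight (traded k l) < weight l)%N.
Proof.
move=> enough; have lt_k := proj1 hs k.
rewrite /weight [X in (_ < X)%N](sum_count_split (fun e => p ^ e)%N (s k.+1)).
rewrite !big_cat /= !sumr_nseq 3!mulrn_nat -expnD (subnKC (ltnW lt_k)) mulnBr.
set S := \sum_(_ <- _) _; set c := count_mem _ _.
set Q := (q ^ _)%N; set P := (p ^ s k.+1)%N.
have Q_gt1 : (1 < Q)%N by rewrite -(exp1n (s k.+1 - s k)) ltn_exp2r ?q_gt1 ?subn_gt0.
have : (P < P * Q)%N by rewrite ltn_Pmulr // expn_gt0 p_gt0.
have : (P * Q <= P * c)%N by rewrite leq_mul2l enough orbT.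
lia.
Qed.

(* The traded list shares an exponent with l, unless l consists of exactly
   q^{δ_k} copies of s_{k+1}, i.e. unless l is a factorization of x_k. *)
Lemma traded_share k (l : seq nat) :
  (q ^ (s k.+1 - s k) <= count_mem (s k.+1) l)%N ->
  \sum_(e <- l) r ^+ e != betti_elt r s k ->
  exists e, e \in l /\ e \in traded k l.
Proof.
move=> enough not_betti; rewrite /traded.
case: (ltnP (q ^ (s k.+1 - s k)) (count_mem (s k.+1) l)) => [lt_qc | le_cq].
  exists (s k.+1); rewrite -has_pred1 has_count !mem_cat !mem_nseq.
  by split; [lia | rewrite subn_gt0 lt_qc eqxx orbT].
case E: [seq e <- l | e != s k.+1] => [|a rest].
  move: not_betti; rewrite (sum_count_split _ (s k.+1)) E big_nil addr0.
  have -> : count_mem (s k.+1) l = (q ^ (s k.+1 - s k))%N.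
    by apply/eqP; rewrite eqn_leq le_cq.
  by rewrite betti_eq trade_eq (subnKC (ltnW (proj1 hs k))) mulr_natl eqxx.
have : a \in [seq e <- l | e != s k.+1] by rewrite E inE eqxx.
rewrite mem_filter => /andP [_ al]; exists a; split => //.
by rewrite !mem_cat inE eqxx !orbT.
Qed.

Definition reduced (l : seq nat) : Prop :=
  forall k, (count_mem (s k.+1) l < q ^ (s k.+1 - s k))%N.

Lemma reduced_or_trade x (l : seq nat) : (forall k, x <> betti_elt r s k) ->
  (forall e, e \in l -> N e) -> \sum_(e <- l) r ^+ e = x ->
  reduced l \/
  exists l', [/\ forall e, e \in l' -> N e, \sum_(e <- l') r ^+ e = x,
                (weight l' < weight l)%N & exists e, e \in l /\ e \in l'].
Proof.
move=> not_betti Nl sum_l.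
case: (classic (reduced l)) => [|/not_all_ex_not [k]]; first by left.
move/negP; rewrite -leqNgt => enough; right; exists (traded k l); split.
- exact: traded_N.
- by rewrite traded_sum.
- exact: traded_weight.
- by apply: traded_share => //; rewrite sum_l; apply/eqP.
Qed.

(* If
   t = s_0, a disjoint l2 would be empty, so would l1.  If t = s_{k+1}, all
   other exponents are at most s_k; clearing denominators at t, q^{δ_k}
   divides c p^t where 0 < c < q^{δ_k} counts the copies of t in l1. *)
Lemma reduced_top (l1 l2 : seq nat) t :
  (forall e, e \in l1 -> N e) -> (forall e, e \in l2 -> N e) ->
  \sum_(e <- l1) r ^+ e = \sum_(e <- l2) r ^+ e ->
  t \in l1 -> (forall e, e \in l1 ++ l2 -> (e <= t)%N) ->
  (forall e, e \in l1 -> e \notin l2) -> reduced l1 -> False.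
Proof.
move=> N1 N2 sum12 tl1 t_max disj red.
have [[|k] tk] := enum_surj hs (N1 t tl1).
  have l2nil : l2 = [::].
    case: l2 {sum12} N2 t_max disj => // a l2 N2 t_max disj.
    have ha : a \in a :: l2 by rewrite inE eqxx.
    have /eqP eat : a == t.
      rewrite eqn_leq t_max ?mem_cat ?ha ?orbT //=.
      by rewrite -tk; exact: (enum_min hs (N2 a ha)).
    by have := disj t tl1; rewrite -eat ha.
  by move: sum12 tl1; rewrite l2nil big_nil => /sum_rexp_eq0 ->.
set h := s k; have lt_ht : (h < t)%N by rewrite -tk (proj1 hs).
have below e : e \in l1 ++ l2 -> e != t -> (e + (t - h) <= t)%N.
  move=> el ne_t; have Ne : N e by move: el; rewrite mem_cat => /orP [/N1 | /N2].
  by move: (enum_gap hs k Ne) (t_max e el); rewrite tk -/h; lia.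
have dvd_l2 : (q ^ (t - h) %| numer l2 t)%N.
  apply: numer_dvd_q => e el2; apply: below; first by rewrite mem_cat el2 orbT.
  by apply: contraNneq (disj t tl1) => <-.
have dvd_rest : (q ^ (t - h) %| numer [seq e <- l1 | e != t] t)%N.
  apply: numer_dvd_q => e; rewrite mem_filter => /andP [ne_t el1].
  by rewrite below ?mem_cat ?el1.
have numer12 : numer l1 t = numer l2 t.
  apply/eqP; rewrite -(eqr_nat rat) !numer_cast ?sum12 // => e el;
  by apply: t_max; rewrite mem_cat el ?orbT.
set c := count_mem t l1.
have : (q ^ (t - h) %| c * p ^ t)%N.
  move: dvd_l2; rewrite -numer12 /numer.
  rewrite (sum_count_split (fun e => p ^ e * q ^ (t - e))%N t).
  by rewrite mulrn_nat subnn muln1 mulnC dvdn_addl.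
rewrite Gauss_dvdl ?coprimeXl ?coprimeXr 1?coprime_sym ?coprime_pq // => /dvdn_small.
have c_pos : (0 < c)%N by rewrite -has_count has_pred1.
have c_lt : (c < q ^ (t - h))%N by rewrite /c -tk; exact: red.
by move=> /(_ c_lt); lia.
Qed.

(* Two nonempty reduced factorizations of the same element share an exponent:
   otherwise apply reduced_top at the largest exponent occurring in either. *)
Lemma reduced_share (l1 l2 : seq nat) :
  (forall e, e \in l1 -> N e) -> (forall e, e \in l2 -> N e) ->
  \sum_(e <- l1) r ^+ e = \sum_(e <- l2) r ^+ e ->
  reduced l1 -> reduced l2 -> l1 ++ l2 != [::] ->
  exists e, e \in l1 /\ e \in l2.
Proof.
move=> N1 N2 sum12 red1 red2 ne.
case: (boolP (has (mem l2) l1)) => [/hasP [e e1 e2] | /hasPn disj]; first by exists e.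
set t := \max_(e <- l1 ++ l2) e.
have t_max e : e \in l1 ++ l2 -> (e <= t)%N by move=> el; exact: leq_bigmax_seq.
exfalso; move: (bigmax_mem ne); rewrite -/t mem_cat => /orP [tl1 | tl2].
  exact: (reduced_top N1 N2 sum12 tl1 t_max disj red1).
apply: (reduced_top N2 N1 (esym sum12) tl2 _ _ red2).
  by move=> e; rewrite mem_cat orbC -mem_cat; exact: t_max.
by move=> e e2; apply: contraL e2; exact: disj.
Qed.

(* If x is none of the x_k, any two factorizations of x are R-related: trade
   down while possible, by induction on the total weight, and conclude with
   reduced_share. *)
Lemma exps_connected x (l1 l2 : seq nat) : (forall k, x <> betti_elt r s k) ->
  (forall e, e \in l1 -> N e) -> (forall e, e \in l2 -> N e) ->
  \sum_(e <- l1) r ^+ e = x -> \sum_(e <- l2) r ^+ e = x ->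
  Rrel r N x [seq r ^+ e | e <- l1] [seq r ^+ e | e <- l2].
Proof.
move=> not_betti.
have share_R (l l' : seq nat) :
    (forall e, e \in l -> N e) -> (forall e, e \in l' -> N e) ->
    \sum_(e <- l) r ^+ e = x -> \sum_(e <- l') r ^+ e = x ->
    (exists e, e \in l /\ e \in l') ->
    Rrel r N x [seq r ^+ e | e <- l] [seq r ^+ e | e <- l'].
  move=> Nl Nl' <- sum_l' [e [el el']]; apply: Rrel_share; first exact: exps_fact.
    by rewrite -sum_l'; exact: exps_fact.
  by exists (r ^+ e); rewrite !mem_rexp.
move: {2}(weight l1 + weight l2)%N.+1 (ltnSn (weight l1 + weight l2)) => m.
elim: m l1 l2 => // m IH l1 l2 lt_m N1 N2 sum1 sum2.
case: (reduced_or_trade not_betti N1 sum1) => [red1 | [l1' [N1' sum1' lt1 sh1]]].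
  case: (reduced_or_trade not_betti N2 sum2)
    => [red2 | [l2' [N2' sum2' lt2 [e [e2 e2']]]]].
    case: (eqVneq (l1 ++ l2) [::]) => [/nilP | ne].
      rewrite cat_nilp => /andP [/nilP l1nil /nilP l2nil]; subst l1 l2.
      by apply: Rrel_refl; rewrite -sum1; exact: exps_fact.
    by apply: share_R => //; apply: reduced_share => //; rewrite sum1.
  apply: Rrel_trans (IH l1 l2' _ N1 N2' sum1 sum2') (share_R _ _ N2' N2 sum2' sum2 _).
    by lia.
  by exists e.
apply: Rrel_trans (share_R _ _ N1 N1' sum1 sum1' sh1) (IH l1' l2 _ N1' N2 sum1' sum2).
by lia.
Qed.

Lemma Betti_iff x : is_Betti r N x <-> exists n, x = betti_elt r s n.
Proof.
split=> [[z [z' [hz [hz' not_R]]]] | [n ->]].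
  apply: NNPP => no_n; have not_betti k : x <> betti_elt r s k.
    by move=> xk; apply: no_n; exists k.
  have [l [Nl zl sum_l]] := fact_exps hz; have [l' [Nl' zl' sum_l']] := fact_exps hz'.
  by apply: not_R; rewrite zl zl'; exact: exps_connected.
have [low_f low_m] := Rx_low n; have [high_f _] := Rx_high n.
refine (ex_intro _ _ (ex_intro _ _ (conj low_f (conj high_f _)))) => R_lh.
have [_] := proj1 (betti_class (or_introl erefl) low_f low_m _) R_lh.
by rewrite mem_rexp mem_nseq => /andP [_ /eqP]; have := proj1 hs n; lia.
Qed.

End Semiring.
End PowersOfR.

Unset Implicit Arguments.

Theorem mainTheorem7 (r : rat) (N : nat -> Prop) (s : nat -> nat) :
  0 < r -> numerical_monoid N -> increasing_enum N s ->
  ~ (exists m : nat, r = m%:R) ->  (* nontrivial *)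
  atomic r N ->
  (forall x : rat, is_Betti r N x <-> exists n : nat, x = betti_elt r s n) /\
  (forall n : nat,
     let x := betti_elt r s n in
     (forall z, is_fact r N x z ->
        Rclass_is r N x z (Rx r N x (r ^+ s n)) \/
        Rclass_is r N x z (Rx r N x (r ^+ s n.+1))) /\
     (exists z, is_fact r N x z /\ Rclass_is r N x z (Rx r N x (r ^+ s n))) /\
     (exists z, is_fact r N x z /\ Rclass_is r N x z (Rx r N x (r ^+ s n.+1)))).
Proof.
move=> r_gt0 hN hs r_nonint hat; split=> [x | n x]; first exact: Betti_iff.
have [low_f low_m] := Rx_low r_gt0 r_nonint hN hs hat n.
have [high_f high_m] := Rx_high r_gt0 r_nonint hN hs hat n.
split; first by move=> z; exact: betti_classes.
split.
  exists [seq r ^+ e | e <- nseq (p r ^ (s n.+1 - s n)) (s n)]; split => //.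
  exact: betti_class (or_introl erefl) low_f low_m.
exists [seq r ^+ e | e <- nseq (q r ^ (s n.+1 - s n)) (s n.+1)]; split => //.
exact: betti_class (or_intror erefl) high_f high_m.
Qed.
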